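(* Let $(x_n,y_n)_{n\in\mathbb Z}$ and $(x'_n,y'_n)_{n\in\mathbb Z}$ be two elliptic sequences on the same biquadratic polynomial $F$, in general position. For integers $m\ge1$, $r,s$, let $$P_{m,r,s}(x)=\frac{(x-x_r)(x-x_{r+1})\cdots(x-x_{r+m-1})}{(x-x'_s)(x-x'_{s+1})\cdots(x-x'_{s+m-1})}.$$ Then there are a constant $C_{m,r,s}$ and a polynomial $D_{m,r,s}$ of degree at most $2$ such that, as rational functions of $y$, $$\mathcal D P_{m,r,s}(y)=C_{m,r,s}\,Y_2(y)\,\frac{(y-y_r)\cdots(y-y_{r+m-2})}{(y-y'_{s-1})(y-y'_s)\cdots(y-y'_{s+m-1})},\qquad \mathcal M P_{m,r,s}(y)=D_{m,r,s}(y)\,\frac{(y-y_r)\cdots(y-y_{r+m-2})}{(y-y'_{s-1})\cdots(y-y'_{s+m-1})}.$$ Moreover $C_{1,r,s}=\dfrac{x_r-x'_s}{X_2(x'_s)}$, $D_{1,r,s}(y)=\dfrac{Y_0(y)+(x_r+x'_s)Y_1(y)/2+x_rx'_sY_2(y)}{X_2(x'_s)}$, and for every $m\ge1$: $$D_{m,r,s}(y_{r-1})=-\tfrac12C_{m,r,s}Y_2(y_{r-1})(x_r-x_{r-1}),\quad D_{m,r,s}(y_{r+m-1})=\tfrac12C_{m,r,s}Y_2(y_{r+m-1})(x_{r+m}-x_{r+m-1}),$$ $$D_{m,r,s}(y'_{s-1})=\tfrac12C_{m,r,s}Y_2(y'_{s-1})(x'_s-x'_{s-1}),\quad D_{m,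r,s}(y'_{s+m-1})=-\tfrac12C_{m,r,s}Y_2(y'_{s+m-1})(x'_{s+m}-x'_{s+m-1}).$$
   Context: $F(x,y)=\sum_{i,j=0}^2c_{i,j}x^iy^j=Y_0(y)+xY_1(y)+x^2Y_2(y)=X_0(x)+yX_1(x)+y^2X_2(x)$. An elliptic sequence on $F$ is a doubly infinite sequence $(x_n,y_n)_{n\in\mathbb Z}$ such that for every $n$, $x_n,x_{n+1}$ are the two roots of $x\mapsto F(x,y_n)$ and $y_{n-1},y_n$ are the two roots of $y\mapsto F(x_n,y)$. ''General position'' means all the $x_n,x'_n$ are pairwise distinct, all the $y_n,y'_n$ are pairwise distinct, and $X_2,Y_2$ do not vanish at these points. For a rational function $f$ and a value $y$, let $x^+,x^-$ be the two roots of $F(x,y)=0$ and define $(\mathcal Df)(y)=\frac{f(x^+)-f(x^-)}{x^+-x^-}$ and $(\mathcal Mf)(y)=\frac{f(x^+)+f(x^-)}2$; these are symmetric in $x^\pm$ and define rational functions of $y$; on the lattice, $(\mathcal Df)(y_n)=\frac{f(x_{n+1})-f(x_n)}{x_{n+1}-x_n}$, $(\mathcal Mf)(y_n)=\frac{f(x_n)+f(x_{n+1})}2$. Empty products equal $1$. *)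

From HB Require Import structures.
From mathcomp Require Import all_boot all_order all_algebra.
Set Implicit Arguments. Unset Strict Implicit. Unset Printing Implicit Defensive.
Import Order.TTheory GRing.Theory Num.Theory.
Local Open Scope ring_scope.

Section Biquad.
Variable K : numClosedFieldType.
Variable c : nat -> nat -> K.

Definition Fb (x y : K) : K := \sum_(i < 3) \sum_(j < 3) c i j * x ^+ i * y ^+ j.
(* Y_k(y) : coefficient of x^k ;  X_k(x) : coefficient of y^k *)
Definition Yc (k : nat) (y : K) : K := \sum_(j < 3) c k j * y ^+ j.
Definition Xc (k : nat) (x : K) : K := \sum_(i < 3) c i k * x ^+ i.

(* elliptic sequence: x_n, x_{n+1} are the two roots of x |-> F(x,y_n),
   y_{n-1}, y_n are the two roots of y |-> F(x_n,y) (Vieta form) *)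
Definition elliptic_seq (xs ys : int -> K) : Prop :=
  forall n : int,
    (forall x, Fb x (ys n) = Yc 2 (ys n) * (x - xs n) * (x - xs (n + 1))) /\
    (forall y, Fb (xs n) y = Xc 2 (xs n) * (y - ys (n - 1)) * (y - ys n)).

Definition general_position (xs ys xs' ys' : int -> K) : Prop :=
  [/\ (forall n m : int, n != m -> xs n != xs m /\ xs' n != xs' m),
      (forall n m : int, n != m -> ys n != ys m /\ ys' n != ys' m),
      (forall n m : int, xs n != xs' m /\ ys n != ys' m) &
      (forall n : int, [/\ Xc 2 (xs n) != 0, Xc 2 (xs' n) != 0,
                           Yc 2 (ys n) != 0 & Yc 2 (ys' n) != 0])].

Definition Pmrs (xs xs' : int -> K) (m : nat) (r s : int) (x : K) : K :=
  (\prod_(k < m) (x - xs (r + k%:Z))) / (\prod_(k < m) (x - xs' (s + k%:Z))).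

(* divided difference and mean of f over the two roots x^+, x^- *)
Definition Dop (f : K -> K) (xp xm : K) : K := (f xp - f xm) / (xp - xm).
Definition Mop (f : K -> K) (xp xm : K) : K := (f xp + f xm) / 2%:R.

Definition ratY (ys ys' : int -> K) (m : nat) (r s : int) (y : K) : K :=
  (\prod_(k < m.-1) (y - ys (r + k%:Z))) /
  (\prod_(k < m.+1) (y - ys' (s - 1 + k%:Z))).
End Biquad.

From HB Require Import structures.
From mathcomp Require Import all_boot all_order all_algebra.
From mathcomp Require Import ring zify.
Import Order.TTheory GRing.Theory Num.Theory.
Local Open Scope ring_scope.
Set Implicit Arguments. Unset Strict Implicit.

(* The divided difference and the mean satisfy the product rules
   D(fg) = Df Mg + Mf Dg and M(fg) = Mf Mg + (x+ - x-)^2/4 Df Dg, and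
   Y_2(y)^2 (x+ - x-)^2 is the discriminant Y_1^2 - 4 Y_0 Y_2 of F(., y).
   Since P_{m+m',r,s} = P_{m,r,s} P_{m',r+m,s+m}, the constant and the
   quadratic of the product are read off from C_1 D_2 + C_2 D_1 and
   D_1 D_2 + C_1 C_2 disc / 4, provided these are divisible by
   (y - y_{r+m-1}) (y - y'_{s+m-1}); the prescribed values of D_1, D_2 at
   these junction points are exactly what makes them vanish there, and the
   same identity carries the outer endpoint values over.  The case m = 1 is a
   computation with Vieta's formulas, and induction on m concludes. *)

Lemma poly_factor_two_roots (R : fieldType) (p : {poly R}) (a b : R) n :
  a != b -> (size p <= n.+2)%N -> root p a -> root p b ->
  exists2 q : {poly R}, (size q <= n)%N & p = q * (('X - a%:P) * ('X - b%:P)).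
Proof.
move=> nab sp pa pb.
have [q epq] : exists q, p = q * \prod_(z <- [:: a; b]) ('X - z%:P).
  by apply: uniq_roots_prod_XsubC; rewrite ?uniq_rootsE /= ?inE ?andbT ?nab ?pa ?pb.
rewrite big_cons big_seq1 in epq; exists q => //.
have [q0|nq0] := eqVneq q 0; first by rewrite q0 size_poly0.
move: sp; rewrite epq size_Mmonic ?rpredM ?monicXsubC // size_Mmonic ?polyXsubC_eq0 ?monicXsubC //.
by rewrite !size_XsubC; lia.
Qed.

Section DividedDifference.
Variable K : numClosedFieldType.

Lemma Dop_mul (h f g : K -> K) xp xm : (forall x, h x = f x * g x) -> xp != xm ->
  Dop h xp xm = Dop f xp xm * Mop g xp xm + Mop f xp xm * Dop g xp xm.
Proof.
move=> hfg nx; rewrite /Dop /Mop !hfg.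
by field; rewrite subr_eq0.
Qed.

Lemma Mop_mul (h f g : K -> K) xp xm : (forall x, h x = f x * g x) -> xp != xm ->
  Mop h xp xm = Mop f xp xm * Mop g xp xm
    + (xp - xm) ^+ 2 / 4%:R * (Dop f xp xm * Dop g xp xm).
Proof.
move=> hfg nx; rewrite /Dop /Mop !hfg.
by field; rewrite subr_eq0.
Qed.

End DividedDifference.

Section Biquadratic.
Variables (K : numClosedFieldType) (c : nat -> nat -> K).

Lemma FbE x y : Fb c x y = Yc c 0 y + Yc c 1 y * x + Yc c 2 y * x ^+ 2.
Proof. by rewrite /Fb /Yc !big_ord_recr !big_ord0 /=; ring. Qed.

Lemma Fb_vieta y xp xm : xp != xm -> Fb c xp y = 0 -> Fb c xm y = 0 ->
  Yc c 1 y = - Yc c 2 y * (xp + xm) /\ Yc c 0 y = Yc c 2 y * xp * xm.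
Proof.
move=> nx; rewrite !FbE => Fp Fm.
have Y1E : Yc c 1 y = - Yc c 2 y * (xp + xm).
  have : (xp - xm) * (Yc c 1 y + Yc c 2 y * (xp + xm)) = 0.
    by rewrite -[RHS](subrr 0) -{1}Fp -Fm; ring.
  move/eqP; rewrite mulf_eq0 subr_eq0 (negbTE nx) /= addr_eq0 => /eqP ->; ring.
split=> //; apply/eqP; rewrite -subr_eq0 -[X in _ == X]Fp Y1E; apply/eqP; ring.
Qed.

Lemma Fb_roots y xp xm x : xp != xm -> Fb c xp y = 0 -> Fb c xm y = 0 ->
  Fb c x y = Yc c 2 y * (x - xp) * (x - xm).
Proof. by move=> nx Fp Fm; have [Y1E Y0E] := Fb_vieta nx Fp Fm; rewrite FbE Y1E Y0E; ring. Qed.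

Definition Ypoly k : {poly K} := \poly_(j < 3) c k j.

Lemma Ypoly_horner k y : (Ypoly k).[y] = Yc c k y.
Proof. by rewrite horner_poly. Qed.

Lemma size_Ypoly k : (size (Ypoly k) <= 3)%N.
Proof. exact: size_poly. Qed.

Definition disc : {poly K} := Ypoly 1 ^+ 2 - 4%:R *: (Ypoly 0 * Ypoly 2).

Lemma disc_horner y : disc.[y] = Yc c 1 y ^+ 2 - 4%:R * (Yc c 0 y * Yc c 2 y).
Proof. by rewrite /disc hornerD hornerN hornerZ horner_exp hornerM !Ypoly_horner. Qed.

Lemma size_disc : (size disc <= 5)%N.
Proof.
have sM (p q : {poly K}) : (size p <= 3)%N -> (size q <= 3)%N -> (size (p * q)%R <= 5)%N.
  by move=> sp sq; rewrite (leq_trans (size_polyMleq _ _)) //; lia.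
rewrite (leq_trans (size_polyD _ _)) // geq_max size_polyN expr2 !sM ?size_Ypoly //=.
by rewrite (leq_trans (size_scale_leq _ _)) ?sM ?size_Ypoly.
Qed.

Lemma disc_roots y xp xm : xp != xm -> Fb c xp y = 0 -> Fb c xm y = 0 ->
  disc.[y] = (Yc c 2 y * (xp - xm)) ^+ 2.
Proof. by move=> nx Fp Fm; have [Y1E Y0E] := Fb_vieta nx Fp Fm; rewrite disc_horner Y1E Y0E; ring. Qed.

Definition D1poly (a b : K) : {poly K} :=
  (Xc c 2 b)^-1 *: (Ypoly 0 + ((a + b) / 2%:R) *: Ypoly 1 + (a * b) *: Ypoly 2).

Lemma D1poly_horner a b y : (D1poly a b).[y] =
  (Yc c 0 y + (a + b) * Yc c 1 y / 2%:R + a * b * Yc c 2 y) / Xc c 2 b.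
Proof. by rewrite /D1poly hornerZ !hornerD !hornerZ !Ypoly_horner; ring. Qed.

Lemma size_D1poly a b : (size (D1poly a b) <= 3)%N.
Proof.
have sD (p q : {poly K}) : (size p <= 3)%N -> (size q <= 3)%N -> (size (p + q)%R <= 3)%N.
  by move=> sp sq; rewrite (leq_trans (size_polyD _ _)) // geq_max sp sq.
have sZ (k : K) (p : {poly K}) : (size p <= 3)%N -> (size (k *: p) <= 3)%N.
  exact/leq_trans/size_scale_leq.
by apply/sZ/sD; [apply/sD|]; rewrite ?sZ ?size_Ypoly.
Qed.

Definition jump (xs ys : int -> K) n := Yc c 2 (ys n) * (xs (n + 1) - xs n) / 2%:R.

Section EllipticSequence.
Variables xs ys : int -> K.
Hypothesis ell : elliptic_seq c xs ys.
Hypothesis xs_step : forall n, xs n != xs (n + 1).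

Lemma elliptic_vieta n :
  Yc c 1 (ys n) = - Yc c 2 (ys n) * (xs n + xs (n + 1)) /\
  Yc c 0 (ys n) = Yc c 2 (ys n) * xs n * xs (n + 1).
Proof.
have [Fx _] := ell n.
by apply: Fb_vieta (xs_step n) _ _; rewrite Fx subrr ?mulr0 ?mul0r.
Qed.

Lemma disc_elliptic n : disc.[ys n] = 4%:R * jump xs ys n ^+ 2.
Proof.
have [Y1E Y0E] := elliptic_vieta n.
by rewrite disc_horner /jump Y1E Y0E; field.
Qed.

Lemma D1poly_elliptic a b n : (D1poly a b).[ys n] = Yc c 2 (ys n) *
  ((xs n - a) * (xs (n + 1) - b) + (xs n - b) * (xs (n + 1) - a)) / 2%:R / Xc c 2 b.
Proof.
have [Y1E Y0E] := elliptic_vieta n.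
by rewrite D1poly_horner Y1E Y0E; congr (_ / _); field.
Qed.

End EllipticSequence.
End Biquadratic.

Section LatticeIdentities.
Variables (K : numClosedFieldType) (c : nat -> nat -> K) (xs ys xs' ys' : int -> K).
Hypotheses (ell : elliptic_seq c xs ys) (ell' : elliptic_seq c xs' ys').
Hypotheses (xs_step : forall n, xs n != xs (n + 1)) (xs'_step : forall n, xs' n != xs' (n + 1)).
Hypotheses (ys_inj : forall n m : int, n != m -> ys n != ys m)
           (ys'_inj : forall n m : int, n != m -> ys' n != ys' m).
Hypothesis ys_ys' : forall n m, ys n != ys' m.
Hypothesis X2_xs' : forall n, Xc c 2 (xs' n) != 0.

Definition DM_identities m r s (C : K) (D : {poly K}) : Prop :=
  exists S : seq K, forall y, y \notin S ->
    forall xp xm, xp != xm -> Fb c xp y = 0 -> Fb c xm y = 0 ->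
      Dop (Pmrs xs xs' m r s) xp xm = C * Yc c 2 y * ratY ys ys' m r s y /\
      Mop (Pmrs xs xs' m r s) xp xm = D.[y] * ratY ys ys' m r s y.

Definition DM_endpoints m r s (C : K) (D : {poly K}) : Prop :=
  [/\ D.[ys (r - 1)] = C * - jump c xs ys (r - 1),
      D.[ys (r + m%:Z - 1)] = C * jump c xs ys (r + m%:Z - 1),
      D.[ys' (s - 1)] = C * jump c xs' ys' (s - 1) &
      D.[ys' (s + m%:Z - 1)] = C * - jump c xs' ys' (s + m%:Z - 1)].

Definition DM_spec m r s (C : K) (D : {poly K}) :=
  [/\ (size D <= 3)%N, DM_identities m r s C D & DM_endpoints m r s C D].

Lemma Pmrs1 r s x : Pmrs xs xs' 1 r s x = (x - xs r) / (x - xs' s).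
Proof. by rewrite /Pmrs !big_ord1 /= !addr0. Qed.

Lemma ratY1 r s y : ratY ys ys' 1 r s y = ((y - ys' (s - 1)) * (y - ys' s))^-1.
Proof. by rewrite /ratY big_ord0 big_ord_recr big_ord1 /= addr0 subrK mul1r. Qed.

Lemma DM_identities_1 r s :
  DM_identities 1 r s ((xs r - xs' s) / Xc c 2 (xs' s)) (D1poly c (xs r) (xs' s)).
Proof.
set b := xs' s.
exists [:: ys' (s - 1); ys' s] => y; rewrite !inE negb_or => /andP [y1 y2] xp xm nx Fp Fm.
have [Y1E Y0E] := Fb_vieta nx Fp Fm.
have Fb_b : Yc c 2 y * (b - xp) * (b - xm) = Xc c 2 b * (y - ys' (s - 1)) * (y - ys' s).
  by rewrite -(Fb_roots _ nx Fp Fm); have [_ ->] := ell' s.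
have : Xc c 2 b * (y - ys' (s - 1)) * (y - ys' s) != 0 by rewrite !mulf_neq0 ?subr_eq0 ?X2_xs'.
rewrite -Fb_b !mulf_eq0 !negb_or !subr_eq0 => /andP [/andP [_ bp] bm].
have Y2E : Yc c 2 y = Xc c 2 b * (y - ys' (s - 1)) * (y - ys' s) / ((b - xp) * (b - xm)).
  by rewrite -Fb_b; field; rewrite !subr_eq0 bp bm.
rewrite /Dop /Mop !Pmrs1 ratY1 D1poly_horner Y1E Y0E Y2E -/b.
by split; field; rewrite ?subr_eq0 y1 y2 X2_xs' ?nx bp bm (eq_sym xp) (eq_sym xm) bp bm.
Qed.

Lemma DM_endpoints_1 r s :
  DM_endpoints 1 r s ((xs r - xs' s) / Xc c 2 (xs' s)) (D1poly c (xs r) (xs' s)).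
Proof.
have D1y n := D1poly_elliptic ell xs_step (xs r) (xs' s) n.
have D1y' n := D1poly_elliptic ell' xs'_step (xs r) (xs' s) n.
rewrite /DM_endpoints /jump !addrK D1y D1y' D1y D1y' !subrK.
by split; field; rewrite X2_xs'.
Qed.

Lemma Pmrs_cat m m' r s x : Pmrs xs xs' (m + m') r s x =
  Pmrs xs xs' m r s x * Pmrs xs xs' m' (r + m%:Z) (s + m%:Z) x.
Proof.
rewrite /Pmrs !big_split_ord /= invfM mulrACA.
by congr (_ * (_ / _)); apply: eq_bigr => k _; rewrite PoszD addrA.
Qed.

Lemma ratY_cat m m' r s y : y != ys' (s + m.+1%:Z - 1) ->
  ratY ys ys' (m.+1 + m'.+1) r s y =
  ratY ys ys' m.+1 r s y * ratY ys ys' m'.+1 (r + m.+1%:Z) (s + m.+1%:Z) y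
  * (y - ys (r + m.+1%:Z - 1)) * (y - ys' (s + m.+1%:Z - 1)).
Proof.
move=> yb; rewrite /ratY addnS /= -addSn -addnS !big_split_ord /= big_ord_recr /=.
rewrite [\prod_(k < m'.+2) _]big_ord_recl /= addr0.
have -> : r + m%:Z = r + m.+1%:Z - 1 by lia.
have -> : \prod_(k < m') (y - ys (r + (m.+1 + k)%N)) =
          \prod_(k < m') (y - ys (r + m.+1%:Z + k%:Z)).
  by apply: eq_bigr => k _; rewrite PoszD addrA.
have -> : \prod_(k < m'.+1) (y - ys' (s - 1 + (m.+2 + k)%N)) =
          \prod_(k < m'.+1) (y - ys' (s + m.+1%:Z - 1 + (bump 0 k)%:Z)).
  by apply: eq_bigr => k _; congr (_ - ys' _); rewrite /bump; lia.
rewrite !invfM; set iD := (\prod_(k < m.+2) _)^-1; set iD' := (\prod_(k < m'.+1) _)^-1.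
by field; rewrite subr_eq0.
Qed.

Lemma cross_term_endpoint (C1 C2 d1 d2 h : K) : d1 = C1 * h \/ d2 = C2 * h ->
  d1 * d2 + C1 * C2 / 4%:R * (4%:R * h ^+ 2) = h * (C1 * d2 + C2 * d1).
Proof. by case=> ->; field. Qed.

Section Concatenation.
Variables (m m' : nat) (r s : int) (C1 C2 C : K) (D1 D2 D : {poly K}).
Let a := ys (r + m.+1%:Z - 1).
Let b := ys' (s + m.+1%:Z - 1).
Hypothesis E_factor :
  forall t, C1 * D2.[t] + C2 * D1.[t] = C * ((t - a) * (t - b)).
Hypothesis G_factor : forall t,
  D1.[t] * D2.[t] + C1 * C2 / 4%:R * (disc c).[t] = D.[t] * ((t - a) * (t - b)).

Lemma DM_identities_cat :
  DM_identities m.+1 r s C1 D1 ->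
  DM_identities m'.+1 (r + m.+1%:Z) (s + m.+1%:Z) C2 D2 ->
  DM_identities (m.+1 + m'.+1) r s C D.
Proof.
move=> [S1 id1] [S2 id2]; exists (b :: S1 ++ S2) => y.
rewrite inE mem_cat !negb_or => /and3P [yb yS1 yS2] xp xm nx Fp Fm.
have [Dop1 Mop1] := id1 y yS1 xp xm nx Fp Fm.
have [Dop2 Mop2] := id2 y yS2 xp xm nx Fp Fm.
have PmE := Pmrs_cat m.+1 m'.+1 r s.
rewrite (ratY_cat _ _ yb); split.
  rewrite (Dop_mul PmE nx) Dop1 Mop1 Dop2 Mop2 -/a -/b.
  transitivity (Yc c 2 y * ratY ys ys' m.+1 r s y
    * ratY ys ys' m'.+1 (r + m.+1%:Z) (s + m.+1%:Z) y * (C1 * D2.[y] + C2 * D1.[y])).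
    by ring.
  by rewrite E_factor; ring.
rewrite (Mop_mul PmE nx) Dop1 Mop1 Dop2 Mop2 -/a -/b.
transitivity (ratY ys ys' m.+1 r s y * ratY ys ys' m'.+1 (r + m.+1%:Z) (s + m.+1%:Z) y
  * (D1.[y] * D2.[y] + C1 * C2 / 4%:R * (Yc c 2 y * (xp - xm)) ^+ 2)).
  by ring.
by rewrite -(disc_roots nx Fp Fm) G_factor; ring.
Qed.

(* At an outer endpoint t one of the factors is C_i times the half-jump h, and
   disc(t) = 4 h^2; the cross term then makes G(t) = h E(t). *)
Lemma DM_endpoints_cat :
  DM_endpoints m.+1 r s C1 D1 ->
  DM_endpoints m'.+1 (r + m.+1%:Z) (s + m.+1%:Z) C2 D2 ->
  DM_endpoints (m.+1 + m'.+1) r s C D.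
Proof.
have transfer t h : (t - a) * (t - b) != 0 -> (disc c).[t] = 4%:R * h ^+ 2 ->
    D1.[t] = C1 * h \/ D2.[t] = C2 * h -> D.[t] = C * h.
  move=> W dt e; apply: (mulIf W).
  by rewrite -G_factor dt cross_term_endpoint // E_factor; ring.
have W n : n != r + m.+1%:Z - 1 -> (ys n - a) * (ys n - b) != 0.
  by move=> ?; rewrite mulf_neq0 // subr_eq0 ?ys_inj ?ys_ys'.
have W' n : n != s + m.+1%:Z - 1 -> (ys' n - a) * (ys' n - b) != 0.
  by move=> ?; rewrite mulf_neq0 // subr_eq0 ?ys'_inj // eq_sym ys_ys'.
have disc_ys n := disc_elliptic ell xs_step n.
have disc_ys' n := disc_elliptic ell' xs'_step n.
move=> [l1 _ l1' _] [_ r2 _ r2']; rewrite /DM_endpoints PoszD !addrA.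
split; apply: transfer.
- by apply: W; lia.
- by rewrite disc_ys sqrrN.
- by left.
- by apply: W; lia.
- by rewrite disc_ys.
- by right.
- by apply: W'; lia.
- by rewrite disc_ys'.
- by left.
- by apply: W'; lia.
- by rewrite disc_ys' sqrrN.
- by right.
Qed.

End Concatenation.

Lemma DM_spec_1 r s :
  DM_spec 1 r s ((xs r - xs' s) / Xc c 2 (xs' s)) (D1poly c (xs r) (xs' s)).
Proof. by split; [exact: size_D1poly | exact: DM_identities_1 | exact: DM_endpoints_1]. Qed.

(* E = C1 D2 + C2 D1 and G = D1 D2 + (C1 C2 / 4) disc are the numerators of the
   divided difference and mean of the product P_{m,r,s} P_{m',r+m,s+m}; the
   matching endpoint values make both vanish at the junction points a and b. *)
Lemma DM_spec_cat m m' r s C1 D1 C2 D2 :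
  DM_spec m.+1 r s C1 D1 -> DM_spec m'.+1 (r + m.+1%:Z) (s + m.+1%:Z) C2 D2 ->
  exists C D, DM_spec (m.+1 + m'.+1) r s C D.
Proof.
move=> [sD1 id1 ends1] [sD2 id2 ends2].
have [_ a1 _ b1] := ends1; have [a2 _ b2 _] := ends2.
set a := ys (r + m.+1%:Z - 1) in a1 a2; set b := ys' (s + m.+1%:Z - 1) in b1 b2.
set E := C1 *: D2 + C2 *: D1; set G := D1 * D2 + (C1 * C2 / 4%:R) *: disc c.
have E_at t : E.[t] = C1 * D2.[t] + C2 * D1.[t] by rewrite hornerD !hornerZ.
have G_at t : G.[t] = D1.[t] * D2.[t] + C1 * C2 / 4%:R * (disc c).[t].
  by rewrite hornerD hornerM hornerZ.
have Ea : root E a by rewrite /root E_at a1 a2; apply/eqP; ring.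
have Eb : root E b by rewrite /root E_at b1 b2; apply/eqP; ring.
have Ga : root G a.
  rewrite /root G_at (disc_elliptic ell xs_step) cross_term_endpoint; last by left.
  by rewrite -E_at (eqP Ea) mulr0.
have Gb : root G b.
  rewrite /root G_at (disc_elliptic ell' xs'_step) cross_term_endpoint; last by right.
  by rewrite -E_at (eqP Eb) mulr0.
have sE : (size E <= 3)%N.
  by rewrite (leq_trans (size_polyD _ _)) // geq_max !(leq_trans (size_scale_leq _ _)).
have sG : (size G <= 5)%N.
  rewrite (leq_trans (size_polyD _ _)) // geq_max (leq_trans (size_scale_leq _ _)) ?size_disc //.
  by rewrite (leq_trans (size_polyMleq _ _)) //; lia.
have ab : a != b := ys_ys' _ _.
have [q sq eE] := @poly_factor_two_roots _ E a b 1 ab sE Ea Eb.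
have [D sD eG] := @poly_factor_two_roots _ G a b 3 ab sG Ga Gb.
have W t : (('X - a%:P) * ('X - b%:P)).[t] = (t - a) * (t - b).
  by rewrite hornerM !hornerXsubC.
have Efac t : C1 * D2.[t] + C2 * D1.[t] = q`_0 * ((t - a) * (t - b)).
  by rewrite -E_at eE hornerM W {1}(size1_polyC sq) hornerC.
have Gfac t : D1.[t] * D2.[t] + C1 * C2 / 4%:R * (disc c).[t] = D.[t] * ((t - a) * (t - b)).
  by rewrite -G_at eG hornerM W.
exists q`_0, D; split => //.
  exact: DM_identities_cat Efac Gfac id1 id2.
exact: DM_endpoints_cat Efac Gfac ends1 ends2.
Qed.

Lemma DM_spec_exists m r s : exists C D, DM_spec m.+1 r s C D.
Proof.
elim: m => [|m [C [D spec]]]; first by do 2!eexists; exact: DM_spec_1.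
have [C' [D' spec']] := DM_spec_cat spec (DM_spec_1 _ _).
by exists C', D'; rewrite addn1 in spec'.
Qed.
End LatticeIdentities.

Theorem mainTheorem8 (K : numClosedFieldType) (c : nat -> nat -> K)
    (xs ys xs' ys' : int -> K) :
  elliptic_seq c xs ys -> elliptic_seq c xs' ys' ->
  general_position c xs ys xs' ys' ->
  forall (m : nat) (r s : int), (1 <= m)%N ->
  exists (C : K) (D : {poly K}),
    (size D <= 3)%N /\
        (* identities of rational functions in y: they hold for all y outside
           a finite exceptional set, with x^+ <> x^- the two roots of F(.,y) *)
        (exists S : seq K, forall y, y \notin S ->
           forall xp xm, xp != xm -> Fb c xp y = 0 -> Fb c xm y = 0 ->
             Dop (Pmrs xs xs' m r s) xp xm
               = C * Yc c 2 y * ratY ys ys' m r s y /\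
             Mop (Pmrs xs xs' m r s) xp xm = D.[y] * ratY ys ys' m r s y) /\
        (m = 1%N ->
           C = (xs r - xs' s) / Xc c 2 (xs' s) /\
           forall y, D.[y] = (Yc c 0 y + (xs r + xs' s) * Yc c 1 y / 2%:R
                              + xs r * xs' s * Yc c 2 y) / Xc c 2 (xs' s)) /\
        D.[ys (r - 1)] = - (C * Yc c 2 (ys (r - 1)) * (xs r - xs (r - 1))) / 2%:R /\
        D.[ys (r + m%:Z - 1)] = C * Yc c 2 (ys (r + m%:Z - 1))
                                  * (xs (r + m%:Z) - xs (r + m%:Z - 1)) / 2%:R /\
        D.[ys' (s - 1)] = C * Yc c 2 (ys' (s - 1)) * (xs' s - xs' (s - 1)) / 2%:R
        /\ D.[ys' (s + m%:Z - 1)] = - (C * Yc c 2 (ys' (s + m%:Z - 1))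
                                  * (xs' (s + m%:Z) - xs' (s + m%:Z - 1))) / 2%:R.
Proof.
move=> ell ell' [x_inj y_inj xy_ne X2_ne] [//|m] r s _.
have xs_step n : xs n != xs (n + 1) by apply: (proj1 (x_inj _ _ _)); lia.
have xs'_step n : xs' n != xs' (n + 1) by apply: (proj2 (x_inj _ _ _)); lia.
have ys_inj n k : n != k -> ys n != ys k by move/y_inj => [].
have ys'_inj n k : n != k -> ys' n != ys' k by move/y_inj => [].
have ys_ys' n k : ys n != ys' k by case: (xy_ne n k).
have X2_xs' n : Xc c 2 (xs' n) != 0 by case: (X2_ne n).
have [C [D [[sD ids ends] m1]]] : exists C D, DM_spec c xs ys xs' ys' m.+1 r s C D /\
    (m.+1 = 1%N -> C = (xs r - xs' s) / Xc c 2 (xs' s) /\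
       forall y, D.[y] = (Yc c 0 y + (xs r + xs' s) * Yc c 1 y / 2%:R
                           + xs r * xs' s * Yc c 2 y) / Xc c 2 (xs' s)).
  case: m => [|m].
    do 2!eexists; split; first exact: DM_spec_1.
    by split=> // y; rewrite D1poly_horner.
  have [C [D spec]] := DM_spec_exists ell ell' xs_step xs'_step ys_inj ys'_inj ys_ys' X2_xs' m.+1 r s.
  by exists C, D.
case: ends; rewrite /jump !subrK => l1 r1 l2 r2.
by exists C, D; do !split => //; rewrite ?l1 ?r1 ?l2 ?r2; ring.
Qed.
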